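(* Suppose Assumptions RA and MON hold and $\mathbb E[D\mid Z=1]-\mathbb E[D\mid Z=0]>0$. Then $p_c=\mathbb E[D\mid Z=1]-\mathbb E[D\mid Z=0]$, $p_a=\mathbb E[D\mid Z=0]$, $p_n=\mathbb E[1-D\mid Z=1]$, $p_{df}=0$; for all $y$, $$F_{11a}^{LB}(y)\equiv\max\Big\{\tfrac{\mathbb P(Y\le y,D=1\mid Z=1)-p_c}{p_a},0\Big\}\le F_{11a}(y)\le\min\Big\{\tfrac{\mathbb P(Y\le y,D=1\mid Z=1)}{p_a},1\Big\}\equiv F_{11a}^{UB}(y),$$ $$F_{00n}^{LB}(y)\equiv\max\Big\{\tfrac{\mathbb P(Y\le y,D=0\mid Z=0)-p_c}{p_n},0\Big\}\le F_{00n}(y)\le\min\Big\{\tfrac{\mathbb P(Y\le y,D=0\mid Z=0)}{p_n},1\Big\}\equiv F_{00n}^{UB}(y),$$ $F_{11c}(y)=\frac{\mathbb P(Y\le y,D=1\mid Z=1)-p_aF_{11a}(y)}{p_c}$, $F_{00c}(y)=\frac{\mathbb P(Y\le y,D=0\mid Z=0)-p_nF_{00n}(y)}{p_c}$, $F_{10a}(y)=\mathbb P(Y\le y\mid D=1,Z=0)$, $F_{01n}(y)=\mathbb P(Y\le y\mid D=0,Z=1)$. These bounds are pointwise sharp.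
   Context: Setup: binary instrument $Z$ ($0<\mathbb P(Z=1)<1$), binary treatment $D$, real outcome $Y$; potential treatments $D_0,D_1$ and potential outcomes $Y_{dz}$ ($d,z\in\{0,1\}$), with $D=D_1Z+D_0(1-Z)$, $Y=(Y_{11}Z+Y_{10}(1-Z))D+(Y_{01}Z+Y_{00}(1-Z))(1-D)$. Types $T=(D_0,D_1)$: $a=(1,1)$, $n=(0,0)$, $c=(0,1)$, $df=(1,0)$, $p_t=\mathbb P(T=t)$. RA: $Z$ independent of $(Y_{11},Y_{10},Y_{01},Y_{00},D_1,D_0)$. MON: either $D_1\ge D_0$ a.s. or $D_0\ge D_1$ a.s. (The exclusion restriction is not assumed.) $F_{dzt}(y)\equiv\mathbb P(Y_{dz}\le y\mid T=t)$. Pointwise sharp: for each $y$, every value in the stated interval is attained for some latent distribution satisfying RA and MON and consistent with the observed distribution of $(Y,D,Z)$. *)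

From HB Require Import structures.
From mathcomp Require Import all_boot all_order all_algebra.
From mathcomp Require Import all_classical all_reals all_analysis.
Set Implicit Arguments. Unset Strict Implicit. Unset Printing Implicit Defensive.
Import Order.TTheory GRing.Theory Num.Theory.
Local Open Scope classical_set_scope.
Local Open Scope ring_scope.

(* The latent variables other than Z:  (D0, D1, Y11, Y10, Y01, Y00). *)
Definition Rest (R : realType) : Type := (bool * bool * R * R * R * R)%type.
(* A latent outcome: (Z, (D0, D1, Y11, Y10, Y01, Y00)).  A "latent
   distribution" is a probability measure on this (product-measurable) space. *)
Definition Lat (R : realType) : Type := (bool * Rest R)%type.

Section Latent.
Variable R : realType.
Implicit Types w : Lat R.

Definition Zv w : bool := w.1.
Definition D0v w : bool := w.2.1.1.1.1.1.
Definition D1v w : bool := w.2.1.1.1.1.2.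
Definition Y11v w : R := w.2.1.1.1.2.
Definition Y10v w : R := w.2.1.1.2.
Definition Y01v w : R := w.2.1.2.
Definition Y00v w : R := w.2.2.

Definition Ypot (d z : bool) w : R :=
  match d, z with
  | true, true => Y11v w | true, false => Y10v w
  | false, true => Y01v w | false, false => Y00v w end.

Definition Dv w : bool := if Zv w then D1v w else D0v w.
Definition Yv w : R := Ypot (Dv w) (Zv w) w.

Definition Tv w : bool * bool := (D0v w, D1v w).
Definition ta : bool * bool := (true, true).
Definition tn : bool * bool := (false, false).
Definition tc : bool * bool := (false, true).
Definition tdf : bool * bool := (true, false).

Definition obs w : (R * bool * bool)%type := (Yv w, Dv w, Zv w).
End Latent.

Section Prob.
Variable R : realType.
Let L := Lat R.
Variable P : probability L R.

Definition Pr (A : set L) : R := fine (P A).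
Definition Prc (A B : set L) : R := Pr (A `&` B) / Pr B.
Definition EcondZ (f : L -> R) (z : bool) : R :=
  fine (\int[P]_(w in [set w | Zv w = z]) (f w)%:E) / Pr [set w | Zv w = z].

Definition ptype (t : bool * bool) : R := Pr [set w | Tv w = t].

Definition Fpot (d z : bool) (t : bool * bool) (y : R) : R :=
  Prc [set w | Ypot d z w <= y] [set w | Tv w = t].

Definition RA : Prop :=
  forall (A : set bool) (B : set (Rest R)), measurable B ->
    P (A `*` B) = (P (fst @^-1` A) * P (snd @^-1` B))%E.

Definition MON : Prop :=
  {ae P, forall w, (D0v w <= D1v w)%N} \/ {ae P, forall w, (D1v w <= D0v w)%N}.
End Prob.

Definition same_obs (R : realType) (P Q : probability (Lat R) R) : Prop :=
  forall B : set (R * bool * bool)%type, measurable B ->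
    P (@obs R @^-1` B) = Q (@obs R @^-1` B).

From HB Require Import structures.
From mathcomp Require Import all_boot all_order all_algebra.
From mathcomp Require Import all_classical all_reals all_analysis.
From mathcomp Require Import ring lra.
Set Implicit Arguments. Unset Strict Implicit. Unset Printing Implicit Defensive.
Import Order.TTheory GRing.Theory Num.Theory.
Local Open Scope classical_set_scope.
Local Open Scope ring_scope.

(* Under random assignment Z only reweights the latent type T = (D0, D1), so
   every observed probability conditional on Z is a sum over the types
   compatible with (D, Z).  With a positive first stage, monotonicity rules out
   defiers, and E[D | Z] then gives p_a, p_c, p_n.  The units with D = 1, Z = 1
   are the always-takers and the compliers, mixed in the known proportions
   p_a : p_c; splitting P(Y <= y, D = 1 | Z = 1) between them in the two extreme
   ways gives the bounds on F_11a and determines F_11c from F_11a, while F_10a is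
   identified because always-takers are the only units with D = 1, Z = 0.

   Sharpness: a value v in the bounds is attained by the law that keeps Z
   independent of the rest and leaves the units outside {a, c} alone, but inside
   {a, c} splices Y11, drawn from the units with Y11 <= y (resp. Y11 > y), with
   the other coordinates of an independent always-taker or complier.  The
   weights put mass v below y among spliced always-takers, and the splicing
   preserves the laws of (Y11, D1) and of (T, Y10, Y01, Y00) on {a, c}, hence
   the observed law.  The never-taker half is the always-taker half for the
   relabelling Z -> 1 - Z, D -> 1 - D. *)

Lemma measurable_preimage d1 d2 (T1 : measurableType d1) (T2 : measurableType d2)
    (f : T1 -> T2) (A : set T2) :
  measurable_fun setT f -> measurable A -> measurable (f @^-1` A).
Proof. by move=> mf mA; rewrite -[X in measurable X]setTI; exact: mf. Qed.

Section scaled_image.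
Local Open Scope ereal_scope.
Context d d' (T1 : measurableType d) (T2 : measurableType d') (R : realType).
Variables (m : {measure set T1 -> \bar R}) (f : T1 -> T2) (D : set T1) (k : R).

Definition scaled_image (mf : measurable_fun setT f) (mD : measurable D)
  (k0 : (0 <= k)%R) (A : set T2) : \bar R := k%:E * m (f @^-1` A `&` D).

Variables (mf : measurable_fun setT f) (mD : measurable D) (k0 : (0 <= k)%R).

Let mpreI A : measurable A -> measurable (f @^-1` A `&` D).
Proof. by move=> mA; apply: measurableI => //; exact: measurable_preimage mf mA. Qed.

Let scaled_image0 : scaled_image mf mD k0 set0 = 0.
Proof. by rewrite /scaled_image preimage_set0 set0I measure0 mule0. Qed.

Let scaled_image_ge0 A : 0 <= scaled_image mf mD k0 A.
Proof. by rewrite /scaled_image mule_ge0. Qed.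

Let scaled_image_sigma_additive : semi_sigma_additive (scaled_image mf mD k0).
Proof.
move=> F mF tF mUF; rewrite /scaled_image.
rewrite [X in X @ \oo --> _](_ : _ =
    (fun n => k%:E * \sum_(0 <= i < n) m (f @^-1` F i `&` D))); last first.
  by apply/funext => n; rewrite ge0_sume_distrr.
have [->|kn0] := eqVneq k 0%R.
  rewrite mul0e [X in X @ \oo --> _](_ : _ = cst 0); first exact: cvg_cst.
  by under eq_fun do rewrite mul0e.
apply: cvgeZl => //; rewrite preimage_bigcup setI_bigcupl.
apply: measure_semi_sigma_additive.
- by move=> n; exact: mpreI.
- apply/trivIsetP => /= i j _ _ ij; rewrite setIACA -preimage_setI.
  by move/trivIsetP : tF => /(_ _ _ _ _ ij) ->//; rewrite preimage_set0 set0I.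
- by rewrite -setI_bigcupl -preimage_bigcup; exact: mpreI.
Qed.

HB.instance Definition _ := isMeasure.Build _ _ _ (scaled_image mf mD k0)
  scaled_image0 scaled_image_ge0 scaled_image_sigma_additive.

End scaled_image.

Lemma measure_add4E d (T : measurableType d) (R : realType)
    (m0 m1 m2 m3 m4 : {measure set T -> \bar R}) (A : set T) :
  measure_add m0 (measure_add m1 (measure_add m2 (measure_add m3 m4))) A =
  (m0 A + (m1 A + (m2 A + (m3 A + m4 A))))%E.
Proof.
by do 3 (etransitivity; first exact: measure_addE; congr (_ + _)%E); exact: measure_addE.
Qed.

Lemma mnormalizeE d (T : measurableType d) (R : realType)
    (mu : {measure set T -> \bar R}) (P : probability T R) :
  mu setT = 1%E -> mnormalize mu P = mu.
Proof.
move=> mu1; apply/funext => A.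
by rewrite /mnormalize mu1 onee_eq0 /= invr1 mule1.
Qed.

Lemma measurable_le d (T : measurableType d) (R : realType) (f : T -> R) y :
  measurable_fun setT f -> measurable [set x | f x <= y].
Proof.
move=> mf; have -> : [set x | f x <= y] = f @^-1` [set` `]-oo, y]].
  by apply/seteqP; split=> x /=; rewrite in_itv /=.
by apply: measurable_preimage mf _; exact: measurable_itv.
Qed.

Section measurable_proj.
Context d1 d2 d3 (T1 : measurableType d1) (T2 : measurableType d2) (T3 : measurableType d3).

Lemma measurable_fun_fst_comp (g : T1 -> T2 * T3) : measurable_fun setT g ->
  measurable_fun setT (fun x => (g x).1).
Proof. exact: measurableT_comp measurable_fst. Qed.

Lemma measurable_fun_snd_comp (g : T1 -> T2 * T3) : measurable_fun setT g ->
  measurable_fun setT (fun x => (g x).2).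
Proof. exact: measurableT_comp measurable_snd. Qed.

End measurable_proj.

Ltac measurable_proj := repeat first
  [ exact: measurable_id | exact: measurable_cst
  | apply: measurable_fun_fst_comp | apply: measurable_fun_snd_comp
  | apply: measurable_fun_pair ].

Section Pr.
Context (R : realType) (P : probability (Lat R) R).
Implicit Types A B : set (Lat R).

Lemma measure_PrE A : measurable A -> P A = (Pr P A)%:E.
Proof.
move=> mA; rewrite /Pr fineK// ge0_fin_numE// (le_lt_trans (probability_le1 P mA))//.
exact: ltey.
Qed.

Lemma Pr_ge0 A : 0 <= Pr P A.
Proof. by rewrite /Pr fine_ge0. Qed.

Lemma Pr_setT : Pr P setT = 1.
Proof. by rewrite /Pr probability_setT. Qed.

Lemma Pr_set0 : Pr P set0 = 0.
Proof. by rewrite /Pr measure0. Qed.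

Lemma Pr_setU A B : measurable A -> measurable B -> A `&` B = set0 ->
  Pr P (A `|` B) = Pr P A + Pr P B.
Proof.
move=> mA mB AB; apply: EFin_inj; rewrite EFinD -!measure_PrE//; last exact: measurableU.
by rewrite measureU.
Qed.

Lemma Pr_le A B : measurable A -> measurable B -> A `<=` B -> Pr P A <= Pr P B.
Proof. by move=> mA mB AB; rewrite -lee_fin -!measure_PrE// le_measure// inE. Qed.

Lemma Pr_setIC A B : measurable A -> measurable B ->
  Pr P A = Pr P (A `&` B) + Pr P (A `&` ~` B).
Proof.
move=> mA mB; rewrite -Pr_setU; first by rewrite -setIUr setUv setIT.
- exact: measurableI.
- by apply: measurableI => //; exact: measurableC.
- by rewrite setIACA setICr setI0.
Qed.

Lemma Pr_setC A : measurable A -> Pr P (~` A) = 1 - Pr P A.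
Proof. by move=> mA; have := Pr_setIC measurableT mA; rewrite Pr_setT !setTI => ->; ring. Qed.

Lemma Pr_sub0 A B : measurable A -> measurable B -> A `<=` B -> Pr P B = 0 -> Pr P A = 0.
Proof. by move=> mA mB AB B0; apply/eqP; rewrite eq_le Pr_ge0 -B0 Pr_le. Qed.

End Pr.

Section rest.
Variable R : realType.
Implicit Types (r : Rest R) (b : bool).

Definition rD0 r : bool := r.1.1.1.1.1.
Definition rD1 r : bool := r.1.1.1.1.2.
Definition rY11 r : R := r.1.1.1.2.
Definition rY10 r : R := r.1.1.2.
Definition rY01 r : R := r.1.2.
Definition rY00 r : R := r.2.

Definition typeset (t : bool * bool) : set (Rest R) := [set r | (rD0 r, rD1 r) = t].
Definition y11le (y : R) : set (Rest R) := [set r | rY11 r <= y].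
Definition y10le (y : R) : set (Rest R) := [set r | rY10 r <= y].
Definition zset b : set (Lat R) := [set w | w.1 = b].
Definition restset (B : set (Rest R)) : set (Lat R) := snd @^-1` B.

Lemma measurable_rD0 : measurable_fun setT rD0. Proof. rewrite /rD0; measurable_proj. Qed.
Lemma measurable_rD1 : measurable_fun setT rD1. Proof. rewrite /rD1; measurable_proj. Qed.
Lemma measurable_rY11 : measurable_fun setT rY11. Proof. rewrite /rY11; measurable_proj. Qed.
Lemma measurable_rY10 : measurable_fun setT rY10. Proof. rewrite /rY10; measurable_proj. Qed.

Lemma measurable_rD0_eq b : measurable [set r | rD0 r = b].
Proof. exact: (measurable_preimage (A := [set b]) measurable_rD0). Qed.

Lemma measurable_rD1_eq b : measurable [set r | rD1 r = b].
Proof. exact: (measurable_preimage (A := [set b]) measurable_rD1). Qed.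

Lemma measurable_typeset t : measurable (typeset t).
Proof.
have -> : typeset t = [set r | rD0 r = t.1] `&` [set r | rD1 r = t.2].
  by apply/seteqP; split => r; rewrite /typeset; case: t => a b /=; case=> -> ->.
exact: measurableI (measurable_rD0_eq _) (measurable_rD1_eq _).
Qed.

Lemma measurable_y11le y : measurable (y11le y).
Proof. exact: measurable_le measurable_rY11. Qed.

Lemma measurable_y10le y : measurable (y10le y).
Proof. exact: measurable_le measurable_rY10. Qed.

Lemma measurable_zset b : measurable (zset b).
Proof. exact: (measurable_preimage (A := [set b]) measurable_fst). Qed.

Lemma measurable_restset B : measurable B -> measurable (restset B).
Proof. exact: measurable_preimage measurable_snd. Qed.

Lemma measurable_restset_type t : measurable (restset (typeset t)).
Proof. by apply: measurable_restset; exact: measurable_typeset. Qed.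

End rest.

Ltac unfold_latent := cbv beta iota delta [restset zset typeset y11le y10le
  rD0 rD1 rY11 rY10 rY01 rY00 Yv Dv Zv Tv D0v D1v Ypot Y11v Y10v Y01v Y00v
  setI preimage setU setC set1 setT set0 mkset fst snd ta tn tc tdf].

Ltac latent_seteq := apply/seteqP; split => -[[] [[[[[[] []] ?] ?] ?] ?]];
  unfold_latent; intuition (try discriminate).

Ltac rest_seteq := apply/seteqP; split => -[[[[[[] []] ?] ?] ?] ?];
  unfold_latent; intuition (try discriminate).

Lemma Pr_restsetU (R : realType) (P : probability (Lat R) R) (B1 B2 : set (Rest R)) :
  measurable B1 -> measurable B2 -> B1 `&` B2 = set0 ->
  Pr P (restset (B1 `|` B2)) = Pr P (restset B1) + Pr P (restset B2).
Proof.
move=> mB1 mB2 B12; apply: Pr_setU; try exact: measurable_restset.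
by rewrite -preimage_setI B12 preimage_set0.
Qed.

Section random_assignment.
Variables (R : realType) (P : probability (Lat R) R).
Hypothesis hRA : RA P.
Hypothesis hZ : 0 < Pr P (zset true) < 1.

Lemma Pr_zset_restset b (B : set (Rest R)) : measurable B ->
  Pr P (zset b `&` restset B) = Pr P (zset b) * Pr P (restset B).
Proof.
move=> mB; have -> : zset b `&` restset B = [set b] `*` B.
  by apply/seteqP; split => -[z r] /=; rewrite /zset /restset /=; case.
apply: EFin_inj; rewrite EFinM -!measure_PrE//.
- exact: hRA.
- exact: measurable_restset.
- exact: measurable_zset.
- exact: measurableX.
Qed.

Lemma Pr_zset_false : Pr P (zset false) = 1 - Pr P (zset true).
Proof.
rewrite -Pr_setC; last exact: measurable_zset.
by congr Pr; apply/seteqP; split => -[[] r] /=; rewrite /zset /=.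
Qed.

Lemma Pr_zset_neq0 b : Pr P (zset b) != 0.
Proof.
case/andP: hZ => h1 h2; case: b; first by rewrite gt_eqF.
by rewrite Pr_zset_false subr_eq0 eq_sym lt_eqF.
Qed.

Lemma Prc_zset b (A : set (Lat R)) (B : set (Rest R)) : measurable B ->
  A `&` zset b = zset b `&` restset B -> Prc P A (zset b) = Pr P (restset B).
Proof.
move=> mB AB; rewrite /Prc AB Pr_zset_restset// mulrAC divff ?mul1r//.
exact: Pr_zset_neq0.
Qed.

Lemma Prc_zset_restset b (A C : set (Lat R)) (B1 B2 : set (Rest R)) :
  measurable B1 -> measurable B2 ->
  A `&` C = zset b `&` restset B1 -> C = zset b `&` restset B2 ->
  Prc P A C = Pr P (restset B1) / Pr P (restset B2).
Proof.
move=> mB1 mB2 AC1 C2; rewrite /Prc AC1 C2 !Pr_zset_restset//.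
by rewrite -mulf_div divff ?mul1r//; exact: Pr_zset_neq0.
Qed.

Lemma EcondZ_D (z d : bool) (f : Lat R -> R) (B : set (Rest R)) : measurable B ->
  (forall w, f w = (Dv w == d)%:R) ->
  [set w | Dv w = d] `&` zset z = zset z `&` restset B ->
  EcondZ P f z = Pr P (restset B).
Proof.
move=> mB hf DB; rewrite -(Prc_zset mB DB) /EcondZ /Prc.
have mD : measurable [set w : Lat R | Dv w = d].
  apply: (measurable_preimage (A := [set d])) => //; rewrite /Dv /Zv /D1v /D0v.
  by apply: measurable_fun_ifT; measurable_proj.
rewrite (eq_integral (fun w => (\1_[set w | Dv w = d] w)%:E)); last first.
  by move=> w _; rewrite hf indicE; case: (Dv w =P d) => e; [rewrite mem_set|rewrite memNset].
by rewrite integral_indic //; exact: measurable_zset.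
Qed.

Lemma EcondZ_D1 : EcondZ P (fun w => (Dv w)%:R) true = ptype P ta + ptype P tc.
Proof.
rewrite (@EcondZ_D _ true _ [set r | rD1 r = true]); first last.
- by latent_seteq.
- by move=> w; case: (Dv w).
- exact: measurable_rD1_eq.
have -> : [set r : Rest R | rD1 r = true] = typeset ta `|` typeset tc by rest_seteq.
by rewrite Pr_restsetU; first reflexivity; try exact: measurable_typeset; rest_seteq.
Qed.

Lemma EcondZ_D0 : EcondZ P (fun w => (Dv w)%:R) false = ptype P ta + ptype P tdf.
Proof.
rewrite (@EcondZ_D _ true _ [set r | rD0 r = true]); first last.
- by latent_seteq.
- by move=> w; case: (Dv w).
- exact: measurable_rD0_eq.
have -> : [set r : Rest R | rD0 r = true] = typeset ta `|` typeset tdf by rest_seteq.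
by rewrite Pr_restsetU; first reflexivity; try exact: measurable_typeset; rest_seteq.
Qed.

Lemma EcondZ_notD1 : EcondZ P (fun w => 1 - (Dv w)%:R) true = ptype P tn + ptype P tdf.
Proof.
rewrite (@EcondZ_D _ false _ [set r | rD1 r = false]); first last.
- by latent_seteq.
- by move=> w; case: (Dv w); rewrite ?subrr ?subr0.
- exact: measurable_rD1_eq.
have -> : [set r : Rest R | rD1 r = false] = typeset tn `|` typeset tdf by rest_seteq.
by rewrite Pr_restsetU; first reflexivity; try exact: measurable_typeset; rest_seteq.
Qed.

End random_assignment.

Lemma Pr_ae_eq0 (R : realType) (P : probability (Lat R) R) (Q : Lat R -> Prop)
    (A : set (Lat R)) :
  {ae P, forall w, Q w} -> measurable A -> (forall w, A w -> ~ Q w) -> Pr P A = 0.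
Proof.
case=> N [mN N0 sub] mA AQ; apply: Pr_sub0 mA mN _ _; last by rewrite /Pr N0.
by move=> w /AQ; exact: sub.
Qed.

Lemma MON_of_ptype_df (R : realType) (P : probability (Lat R) R) :
  ptype P tdf = 0 -> MON P.
Proof.
change (Pr P (restset (typeset tdf)) = 0 -> MON P) => hdf.
have mdf := measurable_restset_type (R := R) tdf.
left; exists (restset (typeset tdf)); split => //.
- by rewrite measure_PrE // hdf.
- move=> [z [[[[[d0 d1] ?] ?] ?] ?]] /=.
  by rewrite /D0v /D1v /restset /typeset /rD0 /rD1 /preimage /=; case: d0; case: d1.
Qed.

Section identification.
Variables (R : realType) (P : probability (Lat R) R).
Hypotheses (hRA : RA P) (hZ : 0 < Pr P (zset true) < 1) (hMON : MON P).
Hypothesis hfirst :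
  0 < EcondZ P (fun w => (Dv w)%:R) true - EcondZ P (fun w => (Dv w)%:R) false.

Lemma ptype_df_eq0 : ptype P tdf = 0.
Proof.
have first_stage : EcondZ P (fun w => (Dv w)%:R) true - EcondZ P (fun w => (Dv w)%:R) false
    = ptype P tc - ptype P tdf.
  by rewrite (EcondZ_D1 hRA hZ) (EcondZ_D0 hRA hZ); ring.
case: hMON => hmon.
  change (Pr P (restset (typeset tdf)) = 0).
  apply: (Pr_ae_eq0 hmon (measurable_restset_type tdf)).
  by move=> [z [[[[[d0 d1] ?] ?] ?] ?]]; rewrite /restset /typeset /preimage /rD0 /rD1 /D0v /D1v /= => -[-> ->].
have pc0 : ptype P tc = 0.
  change (Pr P (restset (typeset tc)) = 0).
  apply: (Pr_ae_eq0 hmon (measurable_restset_type tc)).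
  by move=> [z [[[[[d0 d1] ?] ?] ?] ?]]; rewrite /restset /typeset /preimage /rD0 /rD1 /D0v /D1v /= => -[-> ->].
move: hfirst; rewrite first_stage pc0 sub0r oppr_gt0 => hdf.
by apply/eqP; rewrite eq_le (ltW hdf) /=; exact: Pr_ge0.
Qed.

Lemma type_probabilities :
  [/\ ptype P tc = EcondZ P (fun w => (Dv w)%:R) true - EcondZ P (fun w => (Dv w)%:R) false,
      ptype P ta = EcondZ P (fun w => (Dv w)%:R) false,
      ptype P tn = EcondZ P (fun w => 1 - (Dv w)%:R) true &
      ptype P tdf = 0].
Proof.
rewrite (EcondZ_D1 hRA hZ) (EcondZ_D0 hRA hZ) (EcondZ_notD1 hRA hZ) ptype_df_eq0.
by split => //; ring.
Qed.

End identification.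

Lemma ratio_bounds (F : realFieldType) (A C pa pc : F) : 0 <= A <= pa -> 0 <= C <= pc ->
  Num.max ((A + C - pc) / pa) 0 <= A / pa <= Num.min ((A + C) / pa) 1.
Proof.
move=> /andP[A0 Apa] /andP[C0 Cpc].
have [pa0|pa0] := eqVneq pa 0.
  by rewrite pa0 !invr0 !mulr0 ge_max le_min lexx ler01.
have pap : 0 < pa by rewrite lt_neqAle eq_sym pa0 (le_trans A0 Apa).
rewrite ge_max le_min !ler_pM2r ?invr_gt0// ?divr_ge0// ?(ltW pap)//.
by rewrite ler_pdivrMr// mul1r Apa andbT; apply/andP; split; lra.
Qed.

Lemma ratio_complement (F : fieldType) (A C pa pc : F) : (pa = 0 -> A = 0) ->
  C / pc = ((A + C) - pa * (A / pa)) / pc.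
Proof.
move=> hA; have [pa0|pa0] := eqVneq pa 0.
  by rewrite hA // pa0 !mul0r add0r subr0.
by rewrite mulrCA divff// mulr1 addrAC subrr add0r.
Qed.

Section always_takers.
Variables (R : realType) (P : probability (Lat R) R).
Hypotheses (hRA : RA P) (hZ : 0 < Pr P (zset true) < 1).
Variable y : R.

Lemma Prc_Yle_D1_Z1 :
  Prc P [set w | Yv w <= y /\ Dv w = true] [set w | Zv w = true] =
  Pr P (restset (y11le y `&` typeset ta)) + Pr P (restset (y11le y `&` typeset tc)).
Proof.
rewrite (@Prc_zset _ _ hRA hZ true _ (y11le y `&` [set r | rD1 r = true])); last first.
- by latent_seteq.
- exact: measurableI (measurable_y11le y) (measurable_rD1_eq true).
rewrite -Pr_restsetU.
- by congr Pr; congr restset; rest_seteq.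
- exact: measurableI (measurable_y11le y) (measurable_typeset _).
- exact: measurableI (measurable_y11le y) (measurable_typeset _).
- by rest_seteq.
Qed.

Lemma Fpot10a_identified : ptype P tdf = 0 -> Fpot P true false ta y =
  Prc P [set w | Yv w <= y] [set w | Dv w = true /\ Zv w = false].
Proof.
move=> hdf.
have -> : Fpot P true false ta y =
  Pr P (restset (y10le y `&` typeset ta)) / Pr P (restset (typeset ta)) by [].
rewrite (@Prc_zset_restset _ _ hRA hZ false _ _ (y10le y `&` [set r | rD0 r = true])
  [set r | rD0 r = true]); first last.
- by latent_seteq.
- by latent_seteq.
- exact: measurable_rD0_eq.
- exact: measurableI (measurable_y10le y) (measurable_rD0_eq true).
have -> : y10le y `&` [set r | rD0 r = true] =
    (y10le y `&` typeset ta) `|` (y10le y `&` typeset tdf) by rest_seteq.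
have -> : [set r : Rest R | rD0 r = true] = typeset ta `|` typeset tdf by rest_seteq.
have mt t : measurable (y10le y `&` typeset t).
  exact: measurableI (measurable_y10le y) (measurable_typeset _).
rewrite !Pr_restsetU; try exact: measurable_typeset; try exact: mt; try by rest_seteq.
rewrite [Pr P (restset (typeset tdf))]hdf.
rewrite (@Pr_sub0 _ P (restset (y10le y `&` typeset tdf)) (restset (typeset tdf))) ?addr0 //.
- by apply: measurable_restset; exact: mt.
- exact: measurable_restset_type.
- by move=> w [].
Qed.

Lemma always_taker_bounds :
  let G1 := Prc P [set w | Yv w <= y /\ Dv w = true] [set w | Zv w = true] in
  [/\ Num.max ((G1 - ptype P tc) / ptype P ta) 0 <= Fpot P true true ta y
        <= Num.min (G1 / ptype P ta) 1 &
      Fpot P true true tc y = (G1 - ptype P ta * Fpot P true true ta y) / ptype P tc].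
Proof.
rewrite /= Prc_Yle_D1_Z1.
have mt t : measurable (restset (y11le y `&` typeset t) : set (Lat R)).
  by apply: measurable_restset; apply: measurableI; [exact: measurable_y11le|exact: measurable_typeset].
have sub t : 0 <= Pr P (restset (y11le y `&` typeset t)) <= ptype P t.
  by rewrite Pr_ge0 /=; apply: Pr_le => //; [exact: measurable_restset_type|move=> w []].
change (Fpot P true true ta y) with
  (Pr P (restset (y11le y `&` typeset ta)) / ptype P ta).
change (Fpot P true true tc y) with
  (Pr P (restset (y11le y `&` typeset tc)) / ptype P tc).
split; first exact: ratio_bounds.
apply: ratio_complement => pa0; have /andP[A0 Apa] := sub ta.
by apply/eqP; rewrite eq_le A0 andbT -pa0.
Qed.

End always_takers.

Lemma preimage_setIX (T1 T2 T : Type) (f : T1 * T2 -> T) (X S1 : set T1) (Y S2 : set T2)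
    (S : set T) :
  (forall w w', X w -> Y w' -> (S (f (w, w')) <-> S1 w /\ S2 w')) ->
  f @^-1` S `&` (X `*` Y) = (X `&` S1) `*` (Y `&` S2).
Proof.
move=> H; apply/seteqP; split => -[w w'] /=.
  by move=> [Sf [Xw Yw']]; have [] := (H w w' Xw Yw').1 Sf.
by move=> [[Xw S1w] [Yw' S2w']]; split => //; exact/(H w w' Xw Yw').2.
Qed.

Section splice.
Variable R : realType.
Local Notation L := (Lat R).

Definition splice (p : L * L) : L :=
  let r := p.2.2 in
  (p.2.1, ((((rD0 r, rD1 r), rY11 p.1.2), rY10 r), rY01 r, rY00 r)).

Lemma measurable_splice : measurable_fun setT splice.
Proof. rewrite /splice /rD0 /rD1 /rY11 /rY10 /rY01 /rY00; measurable_proj. Qed.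

Definition ac_types : set (Rest R) := typeset ta `|` typeset tc.

Lemma measurable_ac_types : measurable ac_types.
Proof. exact: measurableU (measurable_typeset _) (measurable_typeset _). Qed.

Lemma scaled_image_spliceE (P : probability L R) (X Y : set L)
    (mXY : measurable (X `*` Y)) (k : R) (k0 : 0 <= k) (S S1 S2 : set L) :
  measurable X -> measurable Y -> measurable S1 -> measurable S2 ->
  (forall w w', X w -> Y w' -> (S (splice (w, w')) <-> S1 w /\ S2 w')) ->
  (scaled_image (P \x P)%E measurable_splice mXY k0 : {measure set L -> \bar R}) S =
    (k * (Pr P (X `&` S1) * Pr P (Y `&` S2)))%:E.
Proof.
move=> mX mY mS1 mS2 H.
transitivity (k%:E * (P \x P)%E (splice @^-1` S `&` X `*` Y))%E; first by [].
rewrite (preimage_setIX H).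
have mA : measurable (X `&` S1) by exact: measurableI.
have mB : measurable (Y `&` S2) by exact: measurableI.
transitivity (k%:E * (P (X `&` S1) * P (Y `&` S2)))%E.
  by congr (_ * _)%E; exact: (product_measure1E P P mA mB).
by rewrite !measure_PrE // -!EFinM.
Qed.

End splice.
Arguments ac_types {R}.

Ltac splice_iff := move=> [? [[[[[? ?] ?] ?] ?] ?]] [? [[[[[? ?] ?] ?] ?] ?]];
  cbv beta iota delta [splice restset preimage typeset ac_types rD0 rD1 rY11 rY10
    rY01 rY00 y11le setI setU mkset setT fst snd];
  intuition.

Section spliced_measure.
Variables (R : realType) (P : probability (Lat R) R) (y v : R).
Local Notation L := (Lat R).
Local Notation pa := (ptype P ta).
Local Notation pc := (ptype P tc).

Definition Xle : set L := restset (ac_types `&` y11le y).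
Definition Xgt : set L := restset (ac_types `&` ~` y11le y).
Definition Xout : set L := restset (~` ac_types).

Lemma measurable_Xle : measurable Xle.
Proof.
apply: measurable_restset; apply: measurableI; first exact: measurable_ac_types.
exact: measurable_y11le.
Qed.

Lemma measurable_Xgt : measurable Xgt.
Proof.
apply: measurable_restset; apply: measurableI; first exact: measurable_ac_types.
apply: measurableC; exact: measurable_y11le.
Qed.

Lemma measurable_Xout : measurable Xout.
Proof. apply: measurable_restset; apply: measurableC; exact: measurable_ac_types. Qed.

Lemma Pr_Xle_Xgt : Pr P Xle + Pr P Xgt = pa + pc.
Proof.
rewrite -Pr_setU; first last.
- by rewrite -preimage_setI setIACA setICr setI0 preimage_set0.
- exact: measurable_Xgt.
- exact: measurable_Xle.
rewrite -preimage_setU -setIUr setUv setIT Pr_restsetU //; try exact: measurable_typeset.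
by rewrite /typeset; apply/seteqP; split => r [] /= -> //.
Qed.

Hypotheses (hpa : 0 < pa) (hpc : 0 < pc).
Hypothesis hv : Num.max ((Pr P Xle - pc) / pa) 0 <= v <= Num.min (Pr P Xle / pa) 1.

Lemma v_range : [/\ 0 <= v, v <= 1, pa * v <= Pr P Xle & Pr P Xle - pc <= pa * v].
Proof.
case/andP: hv; rewrite ge_max le_min => /andP[h1 h2] /andP[h3 h4].
split => //.
- by have := ler_wpM2l (ltW hpa) h3; rewrite mulrCA divff ?mulr1 ?gt_eqF.
- by have := ler_wpM2l (ltW hpa) h1; rewrite mulrCA divff ?mulr1 ?gt_eqF.
Qed.

(* A unit of Xle is spliced with an always-taker with weight w_le_a and with a
   complier with weight w_le_c, and similarly for Xgt: [w_le_a * P Xle = v]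
   puts mass v of the always-takers below y, and
   [w_le_a * pa + w_le_c * pc = 1] leaves the law of Xle unchanged. *)
Definition w_le_a := v / Pr P Xle.
Definition w_gt_a := (1 - v) / Pr P Xgt.
Definition w_le_c := (Pr P Xle - pa * v) / (Pr P Xle * pc).
Definition w_gt_c := (Pr P Xgt - pa * (1 - v)) / (Pr P Xgt * pc).

Lemma w_le_a_ge0 : 0 <= w_le_a.
Proof. by case: v_range => ? ? ? ?; rewrite divr_ge0 ?Pr_ge0. Qed.

Lemma w_gt_a_ge0 : 0 <= w_gt_a.
Proof. by case: v_range => ? ? ? ?; rewrite divr_ge0 ?subr_ge0 ?Pr_ge0. Qed.

Lemma w_le_c_ge0 : 0 <= w_le_c.
Proof.
case: v_range => ? ? ? ?.
by rewrite divr_ge0 ?subr_ge0 ?mulr_ge0 ?Pr_ge0 ?(ltW hpc).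
Qed.

Lemma w_gt_c_ge0 : 0 <= w_gt_c.
Proof.
case: v_range => ? ? ? ?; have := Pr_Xle_Xgt; have := Pr_ge0 P Xgt => ? ?.
rewrite divr_ge0 ?mulr_ge0 ?(ltW hpc) // subr_ge0; nra.
Qed.

Definition spliced :=
  measure_add (mrestr P measurable_Xout)
 (measure_add (scaled_image (P \x P)%E (@measurable_splice R)
                 (measurableX measurable_Xle (measurable_restset_type ta)) w_le_a_ge0)
 (measure_add (scaled_image (P \x P)%E (@measurable_splice R)
                 (measurableX measurable_Xgt (measurable_restset_type ta)) w_gt_a_ge0)
 (measure_add (scaled_image (P \x P)%E (@measurable_splice R)
                 (measurableX measurable_Xle (measurable_restset_type tc)) w_le_c_ge0)
              (scaled_image (P \x P)%E (@measurable_splice R)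
                 (measurableX measurable_Xgt (measurable_restset_type tc)) w_gt_c_ge0)))).

End spliced_measure.

Ltac restset_seteq := apply/seteqP; split => w;
  cbv beta iota delta [restset setI setC setU preimage mkset Xout Xle Xgt]; tauto.

Section spliced_measure_properties.
Variables (R : realType) (P : probability (Lat R) R) (y v : R).
Local Notation L := (Lat R).
Local Notation pa := (ptype P ta).
Local Notation pc := (ptype P tc).
Local Notation Xle := (Xle y).
Local Notation Xgt := (Xgt y).
Local Notation Xout := (@Xout R).
Local Notation Ta := (restset (typeset ta) : set L).
Local Notation Tc := (restset (typeset tc) : set L).

Let measurable_ac : measurable (restset ac_types : set L).
Proof. by apply: measurable_restset; exact: measurable_ac_types. Qed.

Lemma Pr_split_Xle_Xgt S : measurable S ->
  Pr P S = Pr P (S `&` Xout) + Pr P (Xle `&` S) + Pr P (Xgt `&` S).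
Proof.
move=> mS; have my : measurable (restset (y11le y) : set L).
  by apply: measurable_restset; exact: measurable_y11le.
rewrite (Pr_setIC P mS measurable_ac) (Pr_setIC P (measurableI _ _ mS measurable_ac) my).
have -> : S `&` ~` restset ac_types = S `&` Xout by restset_seteq.
have -> : S `&` restset ac_types `&` restset (y11le y) = Xle `&` S by restset_seteq.
have -> : S `&` restset ac_types `&` ~` restset (y11le y) = Xgt `&` S by restset_seteq.
ring.
Qed.

Lemma Pr_split_types S : measurable S ->
  Pr P S = Pr P (S `&` Xout) + Pr P (Ta `&` S) + Pr P (Tc `&` S).
Proof.
move=> mS; rewrite (Pr_setIC P mS measurable_ac).
have -> : S `&` ~` restset ac_types = S `&` Xout by restset_seteq.
have -> : S `&` restset ac_types = (Ta `&` S) `|` (Tc `&` S).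
  by rewrite /ac_types; restset_seteq.
rewrite Pr_setU; first ring.
- exact: measurableI (measurable_restset_type _) mS.
- exact: measurableI (measurable_restset_type _) mS.
- apply/seteqP; split => // w [[+ _] [+ _]]; rewrite /restset /typeset /preimage /=.
  by move=> ->.
Qed.

Hypotheses (hpa : 0 < pa) (hpc : 0 < pc).
Hypothesis hv : Num.max ((Pr P Xle - pc) / pa) 0 <= v <= Num.min (Pr P Xle / pa) 1.
Local Notation mu := (spliced hpa hpc hv).
Local Notation w_le_a := (w_le_a P y v).
Local Notation w_gt_a := (w_gt_a P y v).
Local Notation w_le_c := (w_le_c P y v).
Local Notation w_gt_c := (w_gt_c P y v).

Lemma splicedE (S S1 S2 : set L) : measurable S -> measurable S1 -> measurable S2 ->
  (forall w w', ac_types w.2 -> ac_types w'.2 -> (S (splice (w, w')) <-> S1 w /\ S2 w')) ->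
  mu S = (Pr P (S `&` Xout)
     + w_le_a * (Pr P (Xle `&` S1) * Pr P (Ta `&` S2))
     + w_gt_a * (Pr P (Xgt `&` S1) * Pr P (Ta `&` S2))
     + w_le_c * (Pr P (Xle `&` S1) * Pr P (Tc `&` S2))
     + w_gt_c * (Pr P (Xgt `&` S1) * Pr P (Tc `&` S2)))%:E.
Proof.
move=> mS mS1 mS2 H; rewrite /spliced measure_add4E.
have mXout := @measurable_Xout R; have mXle := @measurable_Xle R y.
have mXgt := @measurable_Xgt R y; have mT := @measurable_restset_type R.
rewrite [X in (X + _)%E](_ : _ = (Pr P (S `&` Xout))%:E); last first.
  exact: measure_PrE (measurableI _ _ mS mXout).
rewrite !(@scaled_image_spliceE R P _ _ _ _ _ S S1 S2) //; try exact: mT;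
  try by move=> w w' Xw Yw'; apply: H; [case: Xw|first [by left|by right]].
by rewrite -!EFinD; congr EFin; ring.
Qed.

Lemma w_le_a_mass : w_le_a * Pr P Xle = v.
Proof.
case: (v_range hpa hv) => v0 v1 pv1 pv2; rewrite /w_le_a.
have [G0|G0] := eqVneq (Pr P Xle) 0; last by rewrite mulfVK.
rewrite G0 mulr0; apply/eqP; rewrite eq_le v0 /=.
by rewrite -(ler_pM2l hpa) mulr0 -G0.
Qed.

Lemma w_gt_a_mass : w_gt_a * Pr P Xgt = 1 - v.
Proof.
case: (v_range hpa hv) => v0 v1 pv1 pv2; have := Pr_Xle_Xgt P y => gg; rewrite /w_gt_a.
have [G0|G0] := eqVneq (Pr P Xgt) 0; last by rewrite mulfVK.
rewrite G0 mulr0; apply/eqP; rewrite eq_le subr_ge0 v1 /=.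
rewrite -(ler_pM2l hpa) mulr0; nra.
Qed.

Lemma w_le_c_mass : w_le_c * Pr P Xle = (Pr P Xle - pa * v) / pc.
Proof.
case: (v_range hpa hv) => v0 v1 pv1 pv2; rewrite /w_le_c.
have [G0|G0] := eqVneq (Pr P Xle) 0; last by rewrite invfM mulrA mulrAC mulfVK.
rewrite G0 mulr0; have -> : pa * v = 0.
  by apply/eqP; rewrite eq_le mulr_ge0 ?(ltW hpa)// andbT -G0.
by rewrite subrr mul0r.
Qed.

Lemma w_gt_c_mass : w_gt_c * Pr P Xgt = (Pr P Xgt - pa * (1 - v)) / pc.
Proof.
case: (v_range hpa hv) => v0 v1 pv1 pv2; have := Pr_Xle_Xgt P y => gg; rewrite /w_gt_c.
have [G0|G0] := eqVneq (Pr P Xgt) 0; last by rewrite invfM mulrA mulrAC mulfVK.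
rewrite G0 mulr0; have -> : pa * (1 - v) = 0.
  apply/eqP; rewrite eq_le mulr_ge0 ?subr_ge0 ?(ltW hpa)// andbT; nra.
by rewrite subrr mul0r.
Qed.

Lemma weights_Xle x : 0 <= x <= Pr P Xle -> w_le_a * (x * pa) + w_le_c * (x * pc) = x.
Proof.
move=> /andP[x0 xG]; have [G0|G0] := eqVneq (Pr P Xle) 0.
  have -> : x = 0 by apply/eqP; rewrite eq_le x0 -G0 xG.
  by rewrite !mul0r !mulr0 addr0.
by rewrite /w_le_a /w_le_c; field; rewrite G0 gt_eqF.
Qed.

Lemma weights_Xgt x : 0 <= x <= Pr P Xgt -> w_gt_a * (x * pa) + w_gt_c * (x * pc) = x.
Proof.
move=> /andP[x0 xG]; have [G0|G0] := eqVneq (Pr P Xgt) 0.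
  have -> : x = 0 by apply/eqP; rewrite eq_le x0 -G0 xG.
  by rewrite !mul0r !mulr0 addr0.
by rewrite /w_gt_a /w_gt_c; field; rewrite G0 gt_eqF.
Qed.

Lemma spliced_first S : measurable S ->
  (forall w w', ac_types w.2 -> ac_types w'.2 -> (S (splice (w, w')) <-> S w)) ->
  mu S = (Pr P S)%:E.
Proof.
move=> mS HS; rewrite (splicedE (S1 := S) (S2 := setT)) //; last first.
  by move=> w w' h1 h2; rewrite HS//; split => // -[].
rewrite !setIT (Pr_split_Xle_Xgt mS); congr EFin.
have h1 : 0 <= Pr P (Xle `&` S) <= Pr P Xle.
  rewrite Pr_ge0 /=; apply: Pr_le; last exact: subIsetl.
  - exact: measurableI (@measurable_Xle R y) mS.
  - exact: measurable_Xle.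
have h2 : 0 <= Pr P (Xgt `&` S) <= Pr P Xgt.
  rewrite Pr_ge0 /=; apply: Pr_le; last exact: subIsetl.
  - exact: measurableI (@measurable_Xgt R y) mS.
  - exact: measurable_Xgt.
rewrite -{3}(weights_Xle h1) -{3}(weights_Xgt h2).
by change (Pr P Ta) with pa; change (Pr P Tc) with pc; ring.
Qed.

Lemma spliced_second S : measurable S ->
  (forall w w', ac_types w.2 -> ac_types w'.2 -> (S (splice (w, w')) <-> S w')) ->
  mu S = (Pr P S)%:E.
Proof.
move=> mS HS; rewrite (splicedE (S1 := setT) (S2 := S)) //; last first.
  by move=> w w' h1 h2; rewrite HS//; split => // -[].
rewrite !setIT (Pr_split_types mS); congr EFin.
rewrite !mulrA w_le_a_mass w_gt_a_mass w_le_c_mass w_gt_c_mass.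
have -> : Pr P Xgt = pa + pc - Pr P Xle by rewrite -(Pr_Xle_Xgt P y); ring.
by field; rewrite gt_eqF.
Qed.

Lemma spliced_setT : mu setT = 1%E.
Proof. by rewrite spliced_second ?Pr_setT. Qed.

Lemma spliced_typeset t : mu (restset (typeset t)) = (Pr P (restset (typeset t)))%:E.
Proof. by apply: spliced_second; [exact: measurable_restset_type|splice_iff]. Qed.

Lemma spliced_y11le_ta : mu (restset (y11le y `&` typeset ta)) = (v * pa)%:E.
Proof.
rewrite (splicedE (S1 := restset (y11le y)) (S2 := Ta)); first last.
- by splice_iff.
- exact: measurable_restset_type.
- by apply: measurable_restset; exact: measurable_y11le.
- by apply: measurable_restset; apply: measurableI;
    [exact: measurable_y11le|exact: measurable_typeset].
have -> : restset (y11le y `&` typeset ta) `&` Xout = set0.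
  apply/seteqP; split => // w; rewrite /Xout /restset /preimage /ac_types /=.
  by move=> [[_ h] +]; apply; left.
have -> : Xle `&` restset (y11le y) = Xle by apply/seteqP; split => w //= [].
have -> : Xgt `&` restset (y11le y) = set0 by apply/seteqP; split => // w /= [[_ ?]].
have -> : Tc `&` Ta = set0.
  by apply/seteqP; split => // -[z r] /= []; rewrite /restset /typeset /preimage /= => ->.
by rewrite setIid !Pr_set0 !mul0r !mulr0 !addr0 add0r mulrA w_le_a_mass.
Qed.

End spliced_measure_properties.

Section observables.
Variable R : realType.

Lemma measurable_Dv : measurable_fun setT (@Dv R).
Proof. by rewrite /Dv; apply: measurable_fun_ifT; rewrite /Zv /D1v /D0v; measurable_proj. Qed.

Lemma measurable_obs : measurable_fun setT (@obs R).
Proof.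
rewrite /obs; apply: measurable_fun_pair; last by rewrite /Zv; measurable_proj.
apply: measurable_fun_pair; last exact: measurable_Dv.
have -> : @Yv R = fun w => if Dv w then (if Zv w then Y11v w else Y10v w)
                       else (if Zv w then Y01v w else Y00v w).
  by apply/funext => w; rewrite /Yv /Ypot; case: (Dv w); case: (Zv w).
apply: measurable_fun_ifT; first exact: measurable_Dv.
  by apply: measurable_fun_ifT; rewrite /Zv /Y11v /Y10v; measurable_proj.
by apply: measurable_fun_ifT; rewrite /Zv /Y01v /Y00v; measurable_proj.
Qed.

Definition obs_slice (b : bool) (E : set (R * bool * bool)) : set (Rest R) :=
  [set r | E (obs (b, r))].

Lemma measurable_obs_slice b E : measurable E -> measurable (obs_slice b E).
Proof.
move=> mE; apply: (measurable_preimage (f := fun r : Rest R => obs (b, r))) => //.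
by apply: (measurableT_comp measurable_obs); measurable_proj.
Qed.

Lemma preimage_obs E : @obs R @^-1` E =
  ([set true] `*` obs_slice true E) `|` ([set false] `*` obs_slice false E).
Proof.
by apply/seteqP; split => -[[] r] /=; rewrite /obs_slice /=;
  [left|right|case=> -[]|case=> -[]].
Qed.

Definition zjoin (p : Lat R * Lat R) : Lat R := (p.1.1, p.2.2).

Lemma measurable_zjoin : measurable_fun setT zjoin.
Proof. rewrite /zjoin; measurable_proj. Qed.

HB.instance Definition _ := isMeasurableFun.Build _ _ _ _ zjoin measurable_zjoin.

End observables.

Section sharp_distribution.
Variables (R : realType) (P : probability (Lat R) R) (y v : R).
Local Notation L := (Lat R).
Local Notation pa := (ptype P ta).
Local Notation pc := (ptype P tc).
Hypotheses (hpa : 0 < pa) (hpc : 0 < pc).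
Hypothesis hv : Num.max ((Pr P (Xle y) - pc) / pa) 0 <= v <= Num.min (Pr P (Xle y) / pa) 1.
Local Notation mu := (spliced hpa hpc hv).

Definition sharp_law : probability L R :=
  distribution (P \x mnormalize mu P)%E (@zjoin R).

Local Notation Q := sharp_law.

Lemma sharp_law_setX (A : set bool) (B : set (Rest R)) : measurable B ->
  Q (A `*` B) = (P (fst @^-1` A) * mu (restset B))%E.
Proof.
move=> mB.
transitivity ((P \x mnormalize mu P)%E (fst @^-1` A `*` restset B)); first by [].
transitivity (P (fst @^-1` A) * mnormalize mu P (restset B))%E.
  apply: product_measure1E; last exact: measurable_restset.
  exact: (measurable_preimage (A := A) measurable_fst).
by rewrite mnormalizeE //; exact: spliced_setT.
Qed.

Lemma sharp_law_restset (B : set (Rest R)) : measurable B -> Q (restset B) = mu (restset B).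
Proof.
move=> mB; have -> : Q (restset B) = Q ([set: bool] `*` B).
  by congr (Q _); apply/seteqP; split => -[z r] //= [].
by rewrite sharp_law_setX // preimage_setT probability_setT mul1e.
Qed.

Lemma RA_sharp_law : RA Q.
Proof.
move=> A B mB; rewrite sharp_law_setX //.
have -> : Q (fst @^-1` A) = Q (A `*` [set: Rest R]).
  by congr (Q _); apply/seteqP; split => -[z r] //= [].
have -> : Q (snd @^-1` B) = Q ([set: bool] `*` B).
  by congr (Q _); apply/seteqP; split => -[z r] //= [].
rewrite !sharp_law_setX // preimage_setT probability_setT mul1e.
by rewrite spliced_setT mule1.
Qed.

Lemma sharp_law_Fpot : Fpot Q true true ta y = v.
Proof.
change (fine (Q (restset (y11le y `&` typeset ta))) / fine (Q (restset (typeset ta))) = v).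
have mt : measurable (y11le y `&` typeset ta).
  exact: measurableI (measurable_y11le y) (measurable_typeset ta).
rewrite (sharp_law_restset mt) (sharp_law_restset (measurable_typeset ta)).
by rewrite spliced_y11le_ta spliced_typeset /= mulfK // gt_eqF.
Qed.

Lemma sharp_law_ptype_df : ptype P tdf = 0 -> ptype Q tdf = 0.
Proof.
change (Pr P (restset (typeset tdf)) = 0 -> Pr Q (restset (typeset tdf)) = 0) => hdf.
by rewrite /Pr (sharp_law_restset (measurable_typeset tdf)) spliced_typeset hdf.
Qed.

Lemma same_obs_sharp_law : RA P -> same_obs P Q.
Proof.
move=> hRA E mE.
have mB1 := measurable_obs_slice true mE; have mB0 := measurable_obs_slice false mE.
rewrite preimage_obs !measureU //; first last.
- by apply/seteqP; split => // -[z r] /= [[-> _] [+ _]].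
- exact: measurableX.
- exact: measurableX.
- by apply/seteqP; split => // -[z r] /= [[-> _] [+ _]].
- exact: measurableX.
- exact: measurableX.
have mR1 := measurable_restset mB1; have mR0 := measurable_restset mB0.
congr (_ + _)%E.
- transitivity (P (fst @^-1` [set true]) * P (restset (obs_slice true E)))%E.
    exact: hRA.
  rewrite [P (restset _)]measure_PrE // -(@spliced_first R P y v hpa hpc hv (restset (obs_slice true E))) //.
    by symmetry; exact: sharp_law_setX.
  by move=> [? [[[[[? ?] ?] ?] ?] ?]] [? [[[[[? ?] ?] ?] ?] ?]];
    rewrite /ac_types /typeset /rD0 /rD1 /= => -[] -[-> ->] [] -[-> ->].
- transitivity (P (fst @^-1` [set false]) * P (restset (obs_slice false E)))%E.
    exact: hRA.
  rewrite [P (restset _)]measure_PrE // -(@spliced_second R P y v hpa hpc hv (restset (obs_slice false E))) //.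
  by symmetry; exact: sharp_law_setX.
Qed.

End sharp_distribution.

Lemma Pr_Xle (R : realType) (P : probability (Lat R) R) (y : R) :
  Pr P (Xle y) = Pr P (restset (y11le y `&` typeset ta)) + Pr P (restset (y11le y `&` typeset tc)).
Proof.
rewrite -Pr_restsetU; first (congr Pr; congr restset; rewrite /ac_types).
- by rewrite setIUl setIC [X in _ `|` X]setIC.
- exact: measurableI (measurable_y11le y) (measurable_typeset _).
- exact: measurableI (measurable_y11le y) (measurable_typeset _).
- apply/seteqP; split => // r [[_ h1] [_ h2]].
  by move: h1 h2; rewrite /typeset /= => -> [].
Qed.

Lemma always_taker_sharp (R : realType) (P : probability (Lat R) R) :
  RA P -> 0 < Pr P (zset true) < 1 -> ptype P tdf = 0 -> 0 < ptype P tc ->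
  forall y v,
  let G1 := Prc P [set w | Yv w <= y /\ Dv w = true] [set w | Zv w = true] in
  Num.max ((G1 - ptype P tc) / ptype P ta) 0 <= v <= Num.min (G1 / ptype P ta) 1 ->
  exists Q : probability (Lat R) R,
    [/\ RA Q, MON Q, same_obs P Q & Fpot Q true true ta y = v].
Proof.
move=> hRA hZ hdf hpc y v; rewrite /= (Prc_Yle_D1_Z1 hRA hZ) -Pr_Xle.
(* If p_a = 0 both bounds and F_11a are 0, since x / 0 = 0. *)
have [pa0|pa0] := eqVneq (ptype P ta) 0.
  rewrite pa0 !invr0 !mulr0 ge_max le_min => /andP[/andP[v0 _] /andP[v0' _]].
  have -> : v = 0 by apply/eqP; rewrite eq_le v0 v0'.
  exists P; split => //; first exact: MON_of_ptype_df.
  by rewrite /Fpot /Prc; change (Pr P (restset (y11le y `&` typeset ta)) / ptype P ta = 0);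
    rewrite pa0 invr0 mulr0.
have hpa : 0 < ptype P ta by rewrite lt_neqAle eq_sym pa0 Pr_ge0.
move=> hv; exists (sharp_law hpa hpc hv); split.
- exact: RA_sharp_law.
- exact/MON_of_ptype_df/sharp_law_ptype_df.
- exact: same_obs_sharp_law.
- exact: sharp_law_Fpot.
Qed.

Section flip.
Variable R : realType.
Local Notation L := (Lat R).

(* The relabelling Z -> 1 - Z, D -> 1 - D: it exchanges always-takers and
   never-takers, fixes compliers and defiers, and sends Y_dz to Y_(1-d)(1-z). *)
Definition flip_rest (r : Rest R) : Rest R :=
  ((((~~ rD1 r, ~~ rD0 r), rY00 r), rY01 r), rY10 r, rY11 r).

Definition flip (w : L) : L := (~~ w.1, flip_rest w.2).

Lemma flipK : involutive flip.
Proof. by case=> z [[[[[d0 d1] ?] ?] ?] ?]; rewrite /flip /flip_rest /= !negbK. Qed.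

Lemma measurable_flip_rest : measurable_fun setT flip_rest.
Proof.
rewrite /flip_rest /rD0 /rD1 /rY00 /rY01 /rY10 /rY11.
repeat apply: measurable_fun_pair; try apply: measurable_neg; measurable_proj.
Qed.

Lemma measurable_flip : measurable_fun setT flip.
Proof.
apply: measurable_fun_pair; first by apply: measurable_neg; measurable_proj.
exact: measurableT_comp measurable_flip_rest measurable_snd.
Qed.

HB.instance Definition _ := isMeasurableFun.Build _ _ _ _ flip measurable_flip.

Definition flip_law (M : probability L R) : probability L R := distribution M flip.

Lemma flip_lawE M X : flip_law M X = M (flip @^-1` X).
Proof. by []. Qed.

Lemma Pr_flip_law M X : Pr (flip_law M) X = Pr M (flip @^-1` X).
Proof. by []. Qed.

Lemma preimage_flipK X : flip @^-1` (flip @^-1` X) = X.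
Proof. by apply/seteqP; split => w; rewrite /preimage /= flipK. Qed.

Lemma flip_lawK M X : flip_law (flip_law M) X = M X.
Proof. by rewrite !flip_lawE preimage_flipK. Qed.

Lemma RA_flip_law M : RA M -> RA (flip_law M).
Proof.
move=> hRA A B mB; rewrite !flip_lawE.
have mfB : measurable (flip_rest @^-1` B) := measurable_preimage measurable_flip_rest mB.
exact: (hRA (negb @^-1` A) _ mfB).
Qed.

Lemma MON_flip_law M : MON M -> MON (flip_law M).
Proof.
have mflip N : measurable N -> measurable (flip @^-1` N).
  exact: measurable_preimage measurable_flip.
case=> -[N [mN N0 sub]]; [left|right]; exists (flip @^-1` N); split;
  rewrite ?flip_lawE ?preimage_flipK //; try exact: mflip.
all: move=> [z [[[[[d0 d1] ?] ?] ?] ?]] /= h; apply: sub => /=.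
all: by move: h; rewrite /D0v /D1v /flip /flip_rest /rD0 /rD1 /=; case: d0; case: d1.
Qed.

Definition flip_obs (t : R * bool * bool) : R * bool * bool := (t.1.1, ~~ t.1.2, ~~ t.2).

Lemma measurable_flip_obs : measurable_fun setT flip_obs.
Proof.
rewrite /flip_obs; apply: measurable_fun_pair; last by apply: measurable_neg; measurable_proj.
by apply: measurable_fun_pair; [measurable_proj|apply: measurable_neg; measurable_proj].
Qed.

Lemma obs_flip w : obs (flip w) = flip_obs (obs w).
Proof. by case: w => [[] [[[[[[] []] ?] ?] ?] ?]]. Qed.

Lemma same_obs_flip_law M1 M2 : same_obs M1 M2 -> same_obs (flip_law M1) (flip_law M2).
Proof.
move=> h E mE; rewrite !flip_lawE.
have -> : flip @^-1` (@obs R @^-1` E) = @obs R @^-1` (flip_obs @^-1` E).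
  by apply/seteqP; split => w; rewrite /preimage /= obs_flip.
by apply: h; exact: measurable_preimage measurable_flip_obs mE.
Qed.

End flip.

Ltac flip_seteq := apply/seteqP; split => -[[] [[[[[[] []] ?] ?] ?] ?]];
  cbv beta iota delta [flip flip_rest negb restset zset typeset rD0 rD1 rY11 rY10 rY01 rY00
    Yv Dv Zv Tv D0v D1v Ypot Y11v Y10v Y01v Y00v setI preimage setU setC set1 setT set0
    mkset fst snd ta tn tc tdf];
  intuition (try discriminate).

Section flip_transfer.
Variables (R : realType) (M : probability (Lat R) R) (y : R).
Local Notation M' := (flip_law M).

Lemma ptype_flip_ta : ptype M' ta = ptype M tn.
Proof. by rewrite /ptype Pr_flip_law; congr Pr; flip_seteq. Qed.

Lemma ptype_flip_tc : ptype M' tc = ptype M tc.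
Proof. by rewrite /ptype Pr_flip_law; congr Pr; flip_seteq. Qed.

Lemma ptype_flip_tdf : ptype M' tdf = ptype M tdf.
Proof. by rewrite /ptype Pr_flip_law; congr Pr; flip_seteq. Qed.

Lemma Pr_flip_zset : Pr M' (zset true) = Pr M (zset false).
Proof. by rewrite Pr_flip_law; congr Pr; flip_seteq. Qed.

Lemma Prc_flip_Yle_D1_Z1 :
  Prc M' [set w | Yv w <= y /\ Dv w = true] [set w | Zv w = true] =
  Prc M [set w | Yv w <= y /\ Dv w = false] [set w | Zv w = false].
Proof. by rewrite /Prc !Pr_flip_law; congr (Pr _ _ / Pr _ _); flip_seteq. Qed.

Lemma Prc_flip_Yle_D1_Z0 :
  Prc M' [set w | Yv w <= y] [set w | Dv w = true /\ Zv w = false] =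
  Prc M [set w | Yv w <= y] [set w | Dv w = false /\ Zv w = true].
Proof. by rewrite /Prc !Pr_flip_law; congr (Pr _ _ / Pr _ _); flip_seteq. Qed.

Lemma Fpot_flip (d z : bool) (t : bool * bool) :
  Fpot M' d z t y = Fpot M (~~ d) (~~ z) (~~ t.2, ~~ t.1) y.
Proof.
rewrite /Fpot /Prc !Pr_flip_law; case: d; case: z; case: t => [[] []];
  by congr (Pr _ _ / Pr _ _); flip_seteq.
Qed.

End flip_transfer.

Lemma same_obs_unflip (R : realType) (M1 M2 : probability (Lat R) R) :
  same_obs (flip_law M1) M2 -> same_obs M1 (flip_law M2).
Proof.
move=> h E mE; transitivity (flip_law (flip_law M1) (@obs R @^-1` E)).
  by rewrite flip_lawK.
exact: same_obs_flip_law h E mE.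
Qed.

Lemma flip_law_assumptions (R : realType) (M : probability (Lat R) R) :
  RA M -> 0 < Pr M (zset true) < 1 -> ptype M tdf = 0 -> 0 < ptype M tc ->
  let M' := flip_law M in
  [/\ RA M', 0 < Pr M' (zset true) < 1, ptype M' tdf = 0 & 0 < ptype M' tc].
Proof.
move=> hRA /andP[hZ0 hZ1] hdf hpc /=; split.
- exact: RA_flip_law.
- by rewrite Pr_flip_zset Pr_zset_false; apply/andP; split; lra.
- by rewrite ptype_flip_tdf.
- by rewrite ptype_flip_tc.
Qed.

Unset Implicit Arguments.

Theorem proposition3 (R : realType) (P : probability (Lat R) R) :
  0 < Pr P [set w | Zv w = true] < 1 ->
  RA P -> MON P ->
  EcondZ P (fun w => (Dv w)%:R) true - EcondZ P (fun w => (Dv w)%:R) false > 0 ->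
  let pc := EcondZ P (fun w => (Dv w)%:R) true - EcondZ P (fun w => (Dv w)%:R) false in
  let pa := EcondZ P (fun w => (Dv w)%:R) false in
  let pn := EcondZ P (fun w => 1 - (Dv w)%:R) true in
  let G1 := fun y : R =>
    Prc P [set w | Yv w <= y /\ Dv w = true] [set w | Zv w = true] in
  let G0 := fun y : R =>
    Prc P [set w | Yv w <= y /\ Dv w = false] [set w | Zv w = false] in
  let LB11a := fun y => Num.max ((G1 y - pc) / pa) 0 in
  let UB11a := fun y => Num.min (G1 y / pa) 1 in
  let LB00n := fun y => Num.max ((G0 y - pc) / pn) 0 in
  let UB00n := fun y => Num.min (G0 y / pn) 1 in
  [/\ ptype P tc = pc, ptype P ta = pa, ptype P tn = pn & ptype P tdf = 0] /\
   (forall y, LB11a y <= Fpot P true true ta y <= UB11a y) /\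
   (forall y, LB00n y <= Fpot P false false tn y <= UB00n y) /\
   (forall y, Fpot P true true tc y = (G1 y - pa * Fpot P true true ta y) / pc) /\
   (forall y, Fpot P false false tc y = (G0 y - pn * Fpot P false false tn y) / pc) /\
   (forall y, Fpot P true false ta y =
      Prc P [set w | Yv w <= y] [set w | Dv w = true /\ Zv w = false]) /\
   (forall y, Fpot P false true tn y =
      Prc P [set w | Yv w <= y] [set w | Dv w = false /\ Zv w = true]) /\
   (forall y v, LB11a y <= v <= UB11a y ->
      exists Q : probability (Lat R) R,
        [/\ RA Q, MON Q, same_obs P Q & Fpot Q true true ta y = v]) /\
   (forall y v, LB00n y <= v <= UB00n y ->
      exists Q : probability (Lat R) R,
        [/\ RA Q, MON Q, same_obs P Q & Fpot Q false false tn y = v]).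
Proof.
move=> hZ hRA hMON hfirst pc pa pn G1 G0 LB11a UB11a LB00n UB00n.
have [epc epa epn hdf] := type_probabilities hRA hZ hMON hfirst.
have hpc : 0 < ptype P tc by rewrite epc.
have [hRA' hZ' hdf' hpc'] := flip_law_assumptions hRA hZ hdf hpc.
rewrite {}/LB11a {}/UB11a {}/LB00n {}/UB00n {}/G1 {}/G0 {}/pc {}/pa {}/pn -epc -epa -epn.
have A11 := always_taker_bounds hRA hZ.
have A00 := always_taker_bounds hRA' hZ'.
have flipE y := (Prc_flip_Yle_D1_Z1 P y, ptype_flip_ta P, ptype_flip_tc P, Fpot_flip P y).
split => //; split; first by move=> y; case: (A11 y).
split; first by move=> y; case: (A00 y); rewrite !flipE.
split; first by move=> y; case: (A11 y).
split; first by move=> y; case: (A00 y); rewrite !flipE.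
split; first by move=> y; exact: Fpot10a_identified hRA hZ y hdf.
split.
  by move=> y; rewrite -(Prc_flip_Yle_D1_Z0 P y) -(Fpot10a_identified hRA' hZ' y hdf') Fpot_flip.
split; first by move=> y v; exact: always_taker_sharp hRA hZ hdf hpc y v.
move=> y v hv; have := @always_taker_sharp _ _ hRA' hZ' hdf' hpc' y v.
rewrite /= !(flipE y) => /(_ hv) [Q [hRAQ hMONQ hobs hF]].
exists (flip_law Q); split.
- exact: RA_flip_law.
- exact: MON_flip_law.
- exact: same_obs_unflip.
- by rewrite Fpot_flip.
Qed.
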